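(* Let $E$ be a closed type of system $\mathcal F$ not containing the type constant $O$. If $E$ is an input type, then $E$ is an output type.
   Context: $\lambda$-terms are those of the untyped $\lambda$-calculus; $Fv(t)$ denotes the free variables of $t$; a term is normal if it contains no $\beta$-redex. Types of system $\mathcal F$ are built from type variables and type constants (atomic types on which one cannot quantify; $O$ is such a constant) with $\rightarrow$ and $\forall$; only proper types are considered (in every $\forall X A$, $X$ occurs free in $A$). A type is closed if it has no free type variable. Typing judgements $\Gamma\vdash_{\mathcal F} t:A$, with $\Gamma = x_1:A_1,\dots,x_n:A_n$, are generated by: (ax) $\Gamma \vdash x_i : A_i$; ($\rightarrow_i$) from $\Gamma, x:B \vdash t : C$ infer $\Gamma \vdash \lambda x t : B \rightarrow C$; ($\rightarrow_e$) from $\Gamma \vdash u : B\rightarrow C$ and $\Gamma \vdash v : B$ infer $\Gamma \vdash (u)v : C$; ($\forall_i$) from $\Gamma \vdash t : A$ with $X$ not free in $\Gamma$ infer $\Gamma \vdash t : \forall X A$; ($\forall_e$) from $\Gamma \vdash t : \forall X A$ infer $\Gamma \vdash t : A[C/X]$ for any type $C$. The system $\mathcal F_0$ is system $\mathcal F$ without the rule ($\forall_e$); its judgements are written $\vdash_{\mathcal F_0}$. A closed type $E$ is an input type if for every normal $\lambda$-term $t$, $\vdash_{\mathcal F} t : E$ implies $\vdash_{\mathcal F_0} t : E$. A closed type $S$ not containing $O$ is an output type if for every normal $\lambda$-term $t$ and term variable $\alpha$, $\alpha : O \vdash_{\mathcal F} t : S$ implies $\alpha\notin Fv(t)$. *)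

From Stdlib Require Import Arith List.
Import ListNotations.

Inductive term : Type :=
| Var : nat -> term
| Lam : nat -> term -> term
| App : term -> term -> term.

Fixpoint free_in (x : nat) (t : term) : Prop :=
  match t with
  | Var y => x = y
  | Lam y u => x <> y /\ free_in x u
  | App u v => free_in x u \/ free_in x v
  end.

Fixpoint normal (t : term) : Prop :=
  match t with
  | Var _ => True
  | Lam _ u => normal u
  | App u v =>
      (match u with Lam _ _ => False | _ => True end) /\ normal u /\ normal v
  end.

(** Types of system F: de Bruijn-indexed type variables, type constants
    (atomic, not quantifiable), arrow and universal quantification. *)
Inductive ty : Type :=
| TVar : nat -> ty
| TCst : nat -> ty
| Arr : ty -> ty -> ty
| All : ty -> ty.           (* forall X. A, X being index 0 in A *)

Definition O : ty := TCst 0.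

Fixpoint occurs_var (k : nat) (A : ty) : bool :=
  match A with
  | TVar n => Nat.eqb n k
  | TCst _ => false
  | Arr B C => occurs_var k B || occurs_var k C
  | All B => occurs_var (S k) B
  end.

Fixpoint proper (A : ty) : Prop :=
  match A with
  | TVar _ | TCst _ => True
  | Arr B C => proper B /\ proper C
  | All B => occurs_var 0 B = true /\ proper B
  end.

Fixpoint closed_at (k : nat) (A : ty) : Prop :=
  match A with
  | TVar n => n < k
  | TCst _ => True
  | Arr B C => closed_at k B /\ closed_at k C
  | All B => closed_at (S k) B
  end.

Definition closed_ty (A : ty) : Prop := closed_at 0 A.

Fixpoint contains_O (A : ty) : Prop :=
  match A with
  | TVar _ => False
  | TCst c => c = 0
  | Arr B C => contains_O B \/ contains_O C
  | All B => contains_O B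
  end.

Fixpoint shift (c : nat) (A : ty) : ty :=
  match A with
  | TVar n => if Nat.ltb n c then TVar n else TVar (S n)
  | TCst k => TCst k
  | Arr B C => Arr (shift c B) (shift c C)
  | All B => All (shift (S c) B)
  end.

Fixpoint shiftn (n : nat) (A : ty) : ty :=
  match n with 0 => A | S m => shift 0 (shiftn m A) end.

Fixpoint subst (k : nat) (C : ty) (A : ty) : ty :=
  match A with
  | TVar n =>
      if Nat.eqb n k then shiftn k C
      else if Nat.ltb k n then TVar (pred n) else TVar n
  | TCst c => TCst c
  | Arr B D => Arr (subst k C B) (subst k C D)
  | All B => All (subst (S k) C B)
  end.

(** A[C/X] where A is the body of forall X A *)
Definition inst (A C : ty) : ty := subst 0 C A.

Definition ctx := list (nat * ty).

Fixpoint lookup (G : ctx) (x : nat) : option ty :=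
  match G with
  | [] => None
  | (y, A) :: G' => if Nat.eqb x y then Some A else lookup G' x
  end.

Definition shift_ctx (G : ctx) : ctx := map (fun p => (fst p, shift 0 (snd p))) G.

(** Typing. [typ true] is system F, [typ false] is system F_0
    (F without the rule forall-elimination).
    Rule (forall_i) in de Bruijn form: typing in the shifted context
    expresses that the abstracted variable X is not free in Gamma. *)
Inductive typ (elim : bool) : ctx -> term -> ty -> Prop :=
| T_ax : forall G x A, lookup G x = Some A -> typ elim G (Var x) A
| T_arr_i : forall G x t B C,
    proper B -> typ elim ((x, B) :: G) t C -> typ elim G (Lam x t) (Arr B C)
| T_arr_e : forall G u v B C,
    typ elim G u (Arr B C) -> typ elim G v B -> typ elim G (App u v) C
| T_all_i : forall G t A,
    occurs_var 0 A = true ->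
    typ elim (shift_ctx G) t A -> typ elim G t (All A)
| T_all_e : forall G t A C,
    elim = true -> proper C ->
    typ elim G t (All A) -> typ elim G t (inst A C).

Definition typF (G : ctx) (t : term) (A : ty) : Prop := typ true G t A.
Definition typF0 (G : ctx) (t : term) (A : ty) : Prop := typ false G t A.

Definition input_type (E : ty) : Prop :=
  closed_ty E /\
  forall t, normal t -> typF [] t E -> typF0 [] t E.

Definition output_type (S : ty) : Prop :=
  closed_ty S /\ ~ contains_O S /\
  forall (t : term) (alpha : nat),
    normal t -> typF [(alpha, O)] t S -> ~ free_in alpha t.

(* Suppose α : O ⊢_F t : E with t normal and α free in t. Since E does not
   mention O, replacing O by Bot → Bot (Bot = ∀X X) everywhere keeps the
   derivation valid, so α : Bot → Bot ⊢_F t : E. Substituting δ = λx (x)x,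
   which has type Bot → Bot in F, for α gives a closed term of type E; it is
   still normal because a variable of type O never occurs in head position.
   As E is an input type the substituted term is typable in F_0. But a term
   typable in F_0 has no subterm δ: without ∀-elimination the type of a
   variable occurrence is never smaller than its declared type, so x cannot
   have both a type A → B and the type A. *)
From Stdlib Require Import Arith List Lia.
Import ListNotations.

(* Not capture-avoiding: it is only used with closed terms u. *)
Fixpoint subst_tm (a : nat) (u : term) (t : term) : term :=
  match t with
  | Var y => if Nat.eqb y a then u else Var y
  | Lam y b => if Nat.eqb y a then Lam y b else Lam y (subst_tm a u b)
  | App p q => App (subst_tm a u p) (subst_tm a u q)
  end.

Fixpoint subterm (u s : term) : Prop :=
  s = u \/ match s with
           | Var _ => False
           | Lam _ b => subterm u b
           | App p q => subterm u p \/ subterm u q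
           end.

Lemma subterm_subst_tm a u t : free_in a t -> subterm u (subst_tm a u t).
Proof.
  induction t as [y|y b IH|p IHp q IHq]; simpl; intros Hfree.
  - subst. rewrite Nat.eqb_refl. destruct u; simpl; auto.
  - destruct Hfree as [Hne Hb]. destruct (Nat.eqb_spec y a); [congruence|].
    simpl. right. auto.
  - simpl. right. destruct Hfree; auto.
Qed.

Lemma lookup_shift_ctx G x :
  lookup (shift_ctx G) x = option_map (shift 0) (lookup G x).
Proof.
  induction G as [|[y B] G IH]; simpl; auto.
  destruct (x =? y); auto.
Qed.

Lemma typ_ctx_free e G s A :
  typ e G s A -> forall G',
  (forall x, free_in x s -> lookup G x = lookup G' x) -> typ e G' s A.
Proof.
  induction 1; intros G' Hagree.
  - constructor. rewrite <- Hagree; simpl; auto.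
  - constructor; auto. apply IHtyp. intros y Hy. simpl.
    destruct (Nat.eqb_spec y x); auto. apply Hagree. simpl; auto.
  - econstructor; [apply IHtyp1 | apply IHtyp2];
      intros; apply Hagree; simpl; auto.
  - constructor; auto. apply IHtyp. intros y Hy.
    rewrite !lookup_shift_ctx, Hagree; auto.
  - apply T_all_e; auto.
Qed.

Lemma typ_var_O e G x A :
  typ e G (Var x) A -> lookup G x = Some O -> A = O.
Proof.
  remember (Var x) as s eqn:Hs. intros Hty. revert Hs.
  induction Hty; intros Hs Hx; try discriminate.
  - injection Hs; intros; subst. congruence.
  - subst. assert (A = O) as ->.
    { apply IHHty; auto. rewrite lookup_shift_ctx, Hx. reflexivity. }
    discriminate.
  - specialize (IHHty Hs Hx). discriminate.
Qed.

(* A variable of type O is never applied, so substituting a normal term for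
   it creates no redex. *)
Lemma normal_subst_tm_var_O e G t A a w :
  typ e G t A -> normal w -> lookup G a = Some O -> normal t ->
  normal (subst_tm a w t).
Proof.
  intros Hty. revert a. induction Hty; intros a Hw Ha Hnorm; simpl.
  - destruct (x =? a); simpl; auto.
  - destruct (Nat.eqb_spec x a); simpl; auto.
    apply IHHty; auto. simpl. destruct (Nat.eqb_spec a x); auto. congruence.
  - simpl in Hnorm. destruct Hnorm as [Hhead [Hu' Hv]]. split; [|split; auto].
    destruct u; simpl; auto.
    + destruct (Nat.eqb_spec n a); simpl; auto. subst.
      assert (Arr B C = O) by (eapply typ_var_O; eauto). discriminate.
    + contradiction.
  - apply IHHty; auto. rewrite lookup_shift_ctx, Ha. reflexivity.
  - apply IHHty; auto.
Qed.

Lemma typ_subst_tm_closed e G t A a T w G' :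
  typ e G t A -> shift 0 T = T -> lookup G a = Some T -> typ e [] w T ->
  (forall x, ~ free_in x w) ->
  (forall x, x <> a -> lookup G x = lookup G' x) ->
  typ e G' (subst_tm a w t) A.
Proof.
  intros Hty. revert a G'.
  induction Hty; intros a G' HT Ha Hw Hclosed Hagree; simpl.
  - destruct (Nat.eqb_spec x a).
    + subst. rewrite Ha in H. injection H; intros; subst.
      apply (typ_ctx_free _ _ _ _ Hw). intros y Hy. exfalso; eapply Hclosed; eauto.
    + constructor. rewrite <- Hagree; auto.
  - destruct (Nat.eqb_spec x a).
    + subst. apply (typ_ctx_free _ G); [constructor; auto|].
      intros y [Hy _]. apply Hagree; auto.
    + constructor; auto. apply IHHty; auto.
      * simpl. destruct (Nat.eqb_spec a x); auto. congruence.
      * intros y Hy. simpl. destruct (y =? x); auto.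
  - econstructor; eauto.
  - constructor; auto. apply IHHty; auto.
    + rewrite lookup_shift_ctx, Ha. simpl. rewrite HT. reflexivity.
    + intros y Hy. rewrite !lookup_shift_ctx, Hagree; auto.
  - apply T_all_e; auto.
Qed.

Fixpoint ty_size (A : ty) : nat :=
  match A with
  | TVar _ | TCst _ => 1
  | Arr B C => S (ty_size B + ty_size C)
  | All B => S (ty_size B)
  end.

Lemma ty_size_shift A c : ty_size (shift c A) = ty_size A.
Proof.
  revert c. induction A; intros; simpl; auto. destruct (n <? c); auto.
Qed.

(* In F_0 only ∀-introduction can change the type of a variable occurrence. *)
Lemma typF0_var_size G x A D :
  typF0 G (Var x) D -> lookup G x = Some A -> ty_size A <= ty_size D.
Proof.
  unfold typF0. remember (Var x) as s eqn:Hs. intros Hty. revert A Hs.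
  induction Hty; intros L Hs HL; try discriminate.
  - injection Hs; intros; subst. rewrite HL in H. injection H; intros; subst.
    lia.
  - simpl. assert (ty_size (shift 0 L) <= ty_size A).
    { apply IHHty; auto. rewrite lookup_shift_ctx, HL. reflexivity. }
    rewrite ty_size_shift in H0. lia.
Qed.

Lemma typF0_var_arr G x B C :
  typF0 G (Var x) (Arr B C) -> lookup G x = Some (Arr B C).
Proof.
  unfold typF0. remember (Var x) as s eqn:Hs. remember (Arr B C) as D eqn:HD.
  intros Hty. destruct Hty; try discriminate.
  injection Hs; intros; subst. auto.
Qed.

Lemma typF0_no_self_app G x C : ~ typF0 G (App (Var x) (Var x)) C.
Proof.
  unfold typF0. remember (App (Var x) (Var x)) as s eqn:Hs. intros Hty.
  induction Hty; try discriminate; auto.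
  injection Hs; intros; subst.
  assert (Hx : lookup G x = Some (Arr B C)) by (apply typF0_var_arr; auto).
  pose proof (typF0_var_size _ _ _ _ Hty2 Hx). simpl in H. lia.
Qed.

Definition delta : term := Lam 0 (App (Var 0) (Var 0)).

Lemma typF0_no_delta_subterm G s A : typF0 G s A -> ~ subterm delta s.
Proof.
  unfold typF0. induction 1; intros Hsub; simpl in Hsub; try discriminate.
  - destruct Hsub as [Hsub|Hsub]; [discriminate|contradiction].
  - destruct Hsub as [Hsub|Hsub]; auto.
    injection Hsub; intros; subst. eapply typF0_no_self_app; eauto.
  - destruct Hsub as [Hsub|[Hsub|Hsub]]; auto. discriminate.
  - auto.
Qed.

Definition Bot : ty := All (TVar 0).

Lemma typF_delta : typF [] delta (Arr Bot Bot).
Proof.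
  unfold typF, delta, Bot. apply T_arr_i; [simpl; auto|].
  apply T_arr_e with (B := All (TVar 0)).
  - change (Arr (All (TVar 0)) (All (TVar 0)))
      with (inst (TVar 0) (Arr (All (TVar 0)) (All (TVar 0)))).
    apply T_all_e; simpl; auto. constructor; reflexivity.
  - constructor; reflexivity.
Qed.

(* Bot → Bot is closed, so it can stand for the constant O. *)
Fixpoint replace_O (A : ty) : ty :=
  match A with
  | TVar n => TVar n
  | TCst c => if Nat.eqb c 0 then Arr Bot Bot else TCst c
  | Arr B C => Arr (replace_O B) (replace_O C)
  | All B => All (replace_O B)
  end.

Lemma occurs_var_replace_O A k : occurs_var k (replace_O A) = occurs_var k A.
Proof.
  revert k. induction A; intros; simpl; auto.
  - destruct (n =? 0); auto.
  - rewrite IHA1, IHA2; auto.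
Qed.

Lemma proper_replace_O A : proper A -> proper (replace_O A).
Proof.
  induction A; simpl; intros; auto.
  - destruct (n =? 0); simpl; auto.
  - tauto.
  - rewrite occurs_var_replace_O; tauto.
Qed.

Lemma replace_O_shift A c : replace_O (shift c A) = shift c (replace_O A).
Proof.
  revert c. induction A; intros; simpl; auto.
  - destruct (n <? c); auto.
  - destruct (n =? 0); auto.
  - rewrite IHA1, IHA2; auto.
  - rewrite IHA; auto.
Qed.

Lemma replace_O_shiftn n A : replace_O (shiftn n A) = shiftn n (replace_O A).
Proof.
  induction n; simpl; auto. rewrite replace_O_shift, IHn; auto.
Qed.

Lemma replace_O_subst A k C :
  replace_O (subst k C A) = subst k (replace_O C) (replace_O A).
Proof.
  revert k. induction A; intros; simpl; auto.
  - destruct (n =? k); [apply replace_O_shiftn|]. destruct (k <? n); auto.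
  - destruct (n =? 0); auto.
  - rewrite IHA1, IHA2; auto.
  - rewrite IHA; auto.
Qed.

Definition replace_O_ctx (G : ctx) : ctx :=
  map (fun p => (fst p, replace_O (snd p))) G.

Lemma lookup_replace_O_ctx G x :
  lookup (replace_O_ctx G) x = option_map (replace_O) (lookup G x).
Proof.
  induction G as [|[y B] G IH]; simpl; auto. destruct (x =? y); auto.
Qed.

Lemma shift_ctx_replace_O_ctx G :
  shift_ctx (replace_O_ctx G) = replace_O_ctx (shift_ctx G).
Proof.
  induction G as [|[y B] G IH]; simpl; auto. rewrite IH, replace_O_shift; auto.
Qed.

Lemma typ_replace_O e G t A :
  typ e G t A -> typ e (replace_O_ctx G) t (replace_O A).
Proof.
  induction 1; simpl.
  - constructor. rewrite lookup_replace_O_ctx, H. reflexivity.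
  - constructor; auto. apply proper_replace_O; auto.
  - econstructor; eauto.
  - constructor; [rewrite occurs_var_replace_O; auto|].
    rewrite shift_ctx_replace_O_ctx; auto.
  - unfold inst. rewrite replace_O_subst.
    apply T_all_e; auto. apply proper_replace_O; auto.
Qed.

Lemma replace_O_free A : ~ contains_O A -> replace_O A = A.
Proof.
  induction A; simpl; intros HO; auto.
  - destruct (Nat.eqb_spec n 0); [contradiction|auto].
  - rewrite IHA1, IHA2; tauto.
  - rewrite IHA; auto.
Qed.

Theorem theorem2p2p8 (E : ty) :
  proper E -> closed_ty E -> ~ contains_O E ->
  input_type E -> output_type E.
Proof.
  intros _ HE HO [_ Hinput]. split; [exact HE | split; [exact HO |]].
  intros t a Hnorm Ht Hfree.
  assert (Ht' : typF [(a, Arr Bot Bot)] t E).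
  { pose proof (typ_replace_O _ _ _ _ Ht) as H. rewrite replace_O_free in H; auto. }
  assert (Hsubst_typ : typF [] (subst_tm a delta t) E).
  { apply typ_subst_tm_closed with [(a, Arr Bot Bot)] (Arr Bot Bot); auto.
    - simpl. rewrite Nat.eqb_refl. reflexivity.
    - exact typF_delta.
    - intros x [Hx Hx']. subst. simpl in Hx'. lia.
    - intros x Hx. simpl. destruct (Nat.eqb_spec x a); [congruence | auto]. }
  assert (Hsubst_normal : normal (subst_tm a delta t)).
  { apply normal_subst_tm_var_O with true [(a, O)] E; auto.
    - simpl. split; auto.
    - simpl. rewrite Nat.eqb_refl. reflexivity. }
  apply (typF0_no_delta_subterm [] _ E (Hinput _ Hsubst_normal Hsubst_typ)).
  apply subterm_subst_tm; auto.
Qed.
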